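(* Let $H$ be a discrete group which admits a Sylow $p$-subgroup $S\le H$. Then there is an exact sequence \[1\to Z(H)\to N_H(S)\to\mathrm{Aut}(H,S)\to\mathrm{Out}(H)\to1,\] where $N_H(S)\to\mathrm{Aut}(H,S)$ sends $h$ to conjugation $c_h$ and $\mathrm{Aut}(H,S)\to\mathrm{Out}(H)$ is the restriction of the projection $\mathrm{Aut}(H)\to\mathrm{Out}(H)$.
   Context: A discrete $p$-toral group is a group containing a normal subgroup isomorphic to $(\mathbb{Z}/p^\infty)^r$ of finite $p$-power index. For a discrete group $H$, a discrete $p$-toral subgroup $S\le H$ is a Sylow $p$-subgroup of $H$ if every discrete $p$-toral subgroup of $H$ is $H$-conjugate to a subgroup of $S$. $\mathrm{Aut}(H,S)$ denotes the group of automorphisms of $H$ mapping $S$ onto $S$. *)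

From HB Require Import structures.
From mathcomp Require Import all_boot all_order all_algebra.
Set Implicit Arguments. Unset Strict Implicit. Unset Printing Implicit Defensive.

Record Grp := {
  gcar :> Type;
  gmul : gcar -> gcar -> gcar;
  ginv : gcar -> gcar;
  gone : gcar;
  gmulA : forall x y z, gmul x (gmul y z) = gmul (gmul x y) z;
  gmul1 : forall x, gmul gone x = x;
  gmulV : forall x, gmul (ginv x) x = gone
}.

Section GrpDefs.
Variable G : Grp.
Local Notation "x * y" := (gmul x y).
Local Notation "x ^-1" := (ginv x).
Local Notation "1" := (gone G).

Definition is_subgroup (P : G -> Prop) : Prop :=
  P 1 /\ (forall x y, P x -> P y -> P (x * y)) /\ (forall x, P x -> P (x^-1)).

Definition conj (h x : G) : G := h * x * h^-1.

Definition is_hom (f : G -> G) : Prop := forall x y, f (x * y) = f x * f y.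

Definition is_aut (f : G -> G) : Prop :=
  is_hom f /\ (forall x y, f x = f y -> x = y) /\ (forall y, exists x, f x = y).

Definition maps_onto (f : G -> G) (S : G -> Prop) : Prop :=
  (forall x, S x -> S (f x)) /\ (forall y, S y -> exists x, S x /\ f x = y).

Definition is_aut_S (S : G -> Prop) (f : G -> G) : Prop := is_aut f /\ maps_onto f S.

Definition is_inner (f : G -> G) : Prop := exists g, forall x, f x = conj g x.

Definition normalizes (S : G -> Prop) (h : G) : Prop := maps_onto (conj h) S.

Definition central (z : G) : Prop := forall x, z * x = x * z.

Definition p_adic_frac (p : nat) (q : rat) : Prop :=
  exists k : nat, (denq q %| (p ^ k)%N%:Z)%Z.

(* A is isomorphic to (Z/p^oo)^r = (Z[1/p]/Z)^r : there is a homomorphism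
   from Z[1/p]^r onto A whose kernel is exactly Z^r. *)
Definition prufer_power (p r : nat) (A : G -> Prop) : Prop :=
  exists phi : ('I_r -> rat) -> G,
    let D := fun v : 'I_r -> rat => forall i, p_adic_frac p (v i) in
    (forall v, D v -> A (phi v)) /\
    (forall v w, D v -> D w -> phi (fun i => (v i + w i)%R) = phi v * phi w) /\
    (forall a, A a -> exists v, D v /\ phi v = a) /\
    (forall v, D v -> (phi v = 1 <-> forall i, denq (v i) = 1%Z)).

Definition has_index (A P : G -> Prop) (m : nat) : Prop :=
  exists reps : 'I_m -> G,
    (forall i, P (reps i)) /\
    (forall i j, A ((reps i)^-1 * reps j) -> i = j) /\
    (forall x, P x -> exists i, A ((reps i)^-1 * x)).

Definition discrete_p_toral (p : nat) (P : G -> Prop) : Prop :=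
  is_subgroup P /\
  exists (A : G -> Prop) (r n : nat),
    is_subgroup A /\ (forall a, A a -> P a) /\
    (forall x a, P x -> A a -> A (conj x a)) /\
    prufer_power p r A /\ has_index A P (p ^ n).

Definition sylow (p : nat) (S : G -> Prop) : Prop :=
  discrete_p_toral p S /\
  forall P, discrete_p_toral p P ->
    exists h, forall x, P x -> S (conj h x).

End GrpDefs.

(* Everything but the surjectivity of Aut(H,S) -> Out(H) is formal. Given f in Aut(H),
   the image f(S) is discrete p-toral, so by the Sylow property c_h o f maps S into S for
   some h, and it remains to show that an injective endomorphism psi of H with
   psi(S) <= S maps S onto S. Let A = (Z/p^oo)^r be the normal torus of S, of index m.
   Every a in A is a p^K-th power in A for all K, while psi(a) has p-power order; taking
   p^K to be the p-part of m!, the permutation of S/A induced by psi(a) has order both a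
   power of p and prime to p, so psi(a) lies in A. As each layer
   {a in A | a^(p^t) = 1} is finite and psi-stable, psi maps A onto A; hence psi induces
   an injection, thus a bijection, of the finite set S/A, and psi maps S onto S. *)

From mathcomp Require Import all_boot all_order all_algebra all_fingroup.
From mathcomp Require Import cyclic ring.
From Stdlib Require Import Classical ClassicalEpsilon FunctionalExtensionality.
From Stdlib Require List.
Set Implicit Arguments. Unset Strict Implicit. Unset Printing Implicit Defensive.
Import GRing.Theory Num.Theory.

Section GroupLaws.
Variable G : Grp.
Local Notation "x ⋅ y" := (@gmul G x y) (at level 40, left associativity).
Local Notation gid := (gone G).
Local Notation inv := (@ginv G).

Lemma gmulgV (x : G) : x ⋅ inv x = gid.
Proof.
rewrite -[x ⋅ inv x]gmul1 -{1}(gmulV (inv x)) -gmulA [inv x ⋅ (x ⋅ _)]gmulA gmulV gmul1.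
exact: gmulV.
Qed.

Lemma gmulg1 (x : G) : x ⋅ gid = x.
Proof. by rewrite -(gmulV x) gmulA gmulgV gmul1. Qed.

Lemma gmulKg (x y : G) : inv x ⋅ (x ⋅ y) = y.
Proof. by rewrite gmulA gmulV gmul1. Qed.

Lemma gmulKVg (x y : G) : x ⋅ (inv x ⋅ y) = y.
Proof. by rewrite gmulA gmulgV gmul1. Qed.

Lemma gmulgK (x y : G) : x ⋅ y ⋅ inv y = x.
Proof. by rewrite -gmulA gmulgV gmulg1. Qed.

Lemma gmulgKV (x y : G) : x ⋅ inv y ⋅ y = x.
Proof. by rewrite -gmulA gmulV gmulg1. Qed.

Lemma gmulI (x y z : G) : x ⋅ y = x ⋅ z -> y = z.
Proof. by move=> e; rewrite -(gmulKg x y) e gmulKg. Qed.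

Lemma ginvK (x : G) : inv (inv x) = x.
Proof. by apply: (@gmulI (inv x)); rewrite gmulgV gmulV. Qed.

Lemma ginvM (x y : G) : inv (x ⋅ y) = inv y ⋅ inv x.
Proof. by apply: (@gmulI (x ⋅ y)); rewrite gmulgV -gmulA gmulKVg gmulgV. Qed.

Lemma ginv1 : inv gid = gid.
Proof. by rewrite -[inv gid]gmulg1 gmulV. Qed.

Lemma ginv_unique (x y : G) : x ⋅ y = gid -> inv x = y.
Proof. by move=> e; apply: (@gmulI x); rewrite gmulgV e. Qed.

Lemma ginvM_cancel (y b c : G) : inv (y ⋅ b) ⋅ (y ⋅ c) = inv b ⋅ c.
Proof. by rewrite ginvM -gmulA gmulKg. Qed.

Fixpoint gpow (x : G) (n : nat) : G := if n is n'.+1 then x ⋅ gpow x n' else gid.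

Lemma hom1 (f : G -> G) : is_hom f -> f gid = gid.
Proof. by move=> hf; apply: (@gmulI (f gid)); rewrite -hf !gmulg1. Qed.

Lemma homV (f : G -> G) x : is_hom f -> f (inv x) = inv (f x).
Proof. by move=> hf; apply/esym/ginv_unique; rewrite -hf gmulgV hom1. Qed.

Lemma homX (f : G -> G) x n : is_hom f -> f (gpow x n) = gpow (f x) n.
Proof. by move=> hf; elim: n => [|n IH] /=; rewrite ?hom1 // hf IH. Qed.

Lemma homJ (f : G -> G) x y : is_hom f -> f (conj x y) = conj (f x) (f y).
Proof. by move=> hf; rewrite /conj !hf homV. Qed.

Variable P : G -> Prop.
Hypothesis P_subgroup : is_subgroup P.

Lemma subg1 : P gid.
Proof. by case: P_subgroup. Qed.

Lemma subgM x y : P x -> P y -> P (x ⋅ y).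
Proof. by case: P_subgroup => _ []; auto. Qed.

Lemma subgV x : P x -> P (inv x).
Proof. by case: P_subgroup => _ []; auto. Qed.

Lemma subgVM x y : P x -> P y -> P (inv x ⋅ y).
Proof. by move=> Px Py; apply: subgM => //; apply: subgV. Qed.

Lemma subgVr x : P (inv x) -> P x.
Proof. by move=> Px; rewrite -(ginvK x); apply: subgV. Qed.

Lemma subgX x n : P x -> P (gpow x n).
Proof. by move=> Px; elim: n => [|n IH] /=; [apply: subg1 | apply: subgM]. Qed.

End GroupLaws.

Lemma exists_NoDup_filter (T : Type) (X : T -> Prop) (l : list T) :
  exists l', List.NoDup l' /\ forall x, List.In x l' <-> List.In x l /\ X x.
Proof.
elim: l => [|a l [l' [l'_uniq l'E]]].
  by exists nil; split; [constructor | move=> x; simpl; tauto].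
case: (classic (X a /\ ~ List.In a l')) => [[Xa a_notin]|not_new].
  exists (a :: l'); split; first by constructor.
  by move=> x /=; rewrite l'E; split; [case=> [<-|[]] | case=> [[<-|]]]; tauto.
exists l'; split => // x; rewrite l'E /=; split; first tauto.
case=> [[ax|x_in] Xx]; last by split.
subst x; case: (classic (List.In a l')) => [/l'E|a_notin]; first tauto.
by case: not_new.
Qed.

Lemma inj_on_finite_onto (T : Type) (X : T -> Prop) (l : list T) (f : T -> T) :
  (forall x, X x -> List.In x l) -> (forall x, X x -> X (f x)) ->
  (forall x y, X x -> X y -> f x = f y -> x = y) ->
  forall y, X y -> exists x, X x /\ f x = y.
Proof.
move=> Xl fX f_inj y Xy.
have [l' [l'_uniq l'E]] := exists_NoDup_filter X l.
have l'X x : List.In x l' <-> X x.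
  by rewrite l'E; split; [case | move=> Xx; split; auto].
have fl'_uniq : List.NoDup (List.map f l').
  by apply: List.NoDup_map_NoDup_ForallPairs => // x z /l'X Xx /l'X Xz; apply: f_inj.
have fl'_sub : List.incl (List.map f l') l'.
  by move=> z /List.in_map_iff [x [<- /l'X Xx]]; apply/l'X; apply: fX.
have := List.NoDup_length_incl fl'_uniq _ fl'_sub.
rewrite List.length_map => /(_ (le_n _)) l'_sub.
have /l'_sub /List.in_map_iff [x [fx /l'X Xx]] : List.In y l' by apply/l'X.
by exists x.
Qed.

Lemma mem_List_In (T : eqType) (x : T) (s : seq T) : x \in s -> List.In x s.
Proof. by elim: s => //= a s IH; rewrite in_cons => /orP [/eqP ->|/IH]; tauto. Qed.

Section PAdicFractions.
Variable p : nat.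
Hypothesis p_gt0 : (0 < p)%N.
Local Open Scope ring_scope.

Lemma natz_intr (n : nat) : (n%:Z)%:~R = n%:R :> rat.
Proof. by []. Qed.

Lemma natrXp_neq0 k : (p ^ k)%:R != 0 :> rat.
Proof. by rewrite pnatr_eq0 -lt0n expn_gt0 p_gt0. Qed.

Lemma p_adic_fracP q : p_adic_frac p q <-> exists k (z : int), q = z%:~R / (p ^ k)%:R.
Proof.
split.
  case=> k /dvdzP [c def_pk]; exists k, (numq q * c).
  rewrite -natz_intr def_pk -{1}(divq_num_den q) !intrM.
  have c_neq0 : c%:~R != 0 :> rat.
    rewrite intr_eq0; apply/negP => /eqP c0; move: def_pk; rewrite c0 mul0r => /eqP.
    by rewrite -[0]/(0%:Z) eqz_nat expn_eq0 (negbTE (lt0n_neq0 p_gt0)).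
  have d_neq0 : (denq q)%:~R != 0 :> rat by rewrite intr_eq0 denq_eq0.
  by field; rewrite d_neq0 c_neq0.
case=> k [z ->]; exists k; set x := _ / _.
have num_den : numq x * (p ^ k)%N%:Z = z * denq x.
  apply: (@intr_inj rat); rewrite !intrM natz_intr numqE /x.
  have d_neq0 : (denq x)%:~R != 0 :> rat by rewrite intr_eq0 denq_eq0.
  by move: d_neq0 (natrXp_neq0 k); rewrite /x => d_neq0 pk_neq0; field.
have : (denq x %| numq x * (p ^ k)%N%:Z)%Z by rewrite num_den dvdz_mull.
by rewrite Gauss_dvdzr // coprimezE coprime_sym coprime_num_den.
Qed.

Lemma p_adic_fracMn (n : nat) q : p_adic_frac p q -> p_adic_frac p (n%:R * q).
Proof.
move=> /p_adic_fracP [k [z ->]]; apply/p_adic_fracP; exists k, (n%:Z * z).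
by rewrite rmorphM /= natz_intr mulrA.
Qed.

Lemma p_adic_frac_divXp K q : p_adic_frac p q -> p_adic_frac p (q / (p ^ K)%:R).
Proof.
move=> /p_adic_fracP [k [z ->]]; apply/p_adic_fracP; exists (k + K)%N, z.
move: (natrXp_neq0 k) (natrXp_neq0 K); rewrite !natrX exprD => pk_neq0 pK_neq0.
by field; rewrite pk_neq0 pK_neq0.
Qed.

Lemma p_adic_frac_int (z : int) : p_adic_frac p z%:~R.
Proof. by apply/p_adic_fracP; exists 0%N, z; rewrite expn0 divr1. Qed.

End PAdicFractions.

Lemma int_ord_decomp (d : nat) (z : int) : (0 < d)%N ->
  exists (e : 'I_d) (w : int), z = ((e : nat)%:Z + w * d%:Z)%R.
Proof.
move=> d_gt0; have d_neq0 : (d%:Z != 0)%R by rewrite eqz_nat -lt0n.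
have mod_lt : (`|(z %% d%:Z)%Z|%N < d)%N.
  by rewrite -ltz_nat gez0_abs ?modz_ge0 // ltz_pmod.
exists (Ordinal mod_lt), (z %/ d%:Z)%Z => /=.
by rewrite gez0_abs ?modz_ge0 // addrC -divz_eq.
Qed.

Section PruferPower.
Variables (G : Grp) (p r : nat) (A : G -> Prop) (phi : ('I_r -> rat) -> G).
Local Notation "x ⋅ y" := (@gmul G x y) (at level 40, left associativity).
Local Notation gid := (gone G).
Local Notation D v := (forall i, p_adic_frac p (v i)).
Hypothesis p_gt0 : (0 < p)%N.
Hypothesis phi_in : forall v, D v -> A (phi v).
Hypothesis phiD : forall v w, D v -> D w -> phi (fun i => (v i + w i)%R) = phi v ⋅ phi w.
Hypothesis phi_onto : forall a, A a -> exists v, D v /\ phi v = a.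
Hypothesis phi_eq1 : forall v, D v -> (phi v = gid <-> forall i, denq (v i) = 1%Z).
Local Open Scope ring_scope.

Lemma eq_phi (v w : 'I_r -> rat) : (forall i, v i = w i) -> phi v = phi w.
Proof. by move=> vw; congr phi; apply: functional_extensionality. Qed.

Lemma phi_int (v : 'I_r -> rat) : (forall i, exists z : int, v i = z%:~R) -> phi v = gid.
Proof.
move=> v_int; have Dv i : p_adic_frac p (v i).
  by have [z ->] := v_int i; apply: p_adic_frac_int.
by apply/phi_eq1 => // i; have [z ->] := v_int i; apply: denq_int.
Qed.

Lemma gpow_phi n (v : 'I_r -> rat) : D v -> gpow (phi v) n = phi (fun i => n%:R * v i).
Proof.
move=> Dv; elim: n => [|n IH] /=.
  by apply/esym/phi_int => i; exists 0; rewrite mul0r.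
rewrite IH -phiD //; last by move=> i; apply: p_adic_fracMn.
by apply: eq_phi => i; rewrite -add1n natrD mulrDl mul1r.
Qed.

Lemma common_denominator (v : 'I_r -> rat) : D v ->
  exists t, forall i, exists z : int, v i = z%:~R / (p ^ t)%:R.
Proof.
move=> Dv; have /fin_all_exists [k vE] i := proj1 (p_adic_fracP p_gt0 _) (Dv i).
pose t := (\max_(j : 'I_r) k j)%N.
exists t => i; have [z ->] := vE i.
have k_le : (k i <= t)%N := @leq_bigmax _ (fun j : 'I_r => k j) i.
exists (z * (p ^ (t - k i))%N%:Z).
rewrite -{2}(subnKC k_le) expnD rmorphM /= natz_intr natrM.
move: (natrXp_neq0 p_gt0 (k i)) (natrXp_neq0 p_gt0 (t - k i)).
by move: (_ ^ k i)%:R (_ ^ (_ - k i))%:R => a b a_neq0 b_neq0; field; rewrite a_neq0 b_neq0.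
Qed.

Lemma prufer_torsion a : A a -> exists t, gpow a (p ^ t) = gid.
Proof.
move=> /phi_onto [v [Dv <-]]; have [t vE] := common_denominator Dv.
exists t; rewrite gpow_phi //; apply: phi_int => i.
by have [z ->] := vE i; exists z; move: (natrXp_neq0 p_gt0 t) => pt_neq0; field.
Qed.

Lemma prufer_divisible a K : A a -> exists b, A b /\ a = gpow b (p ^ K).
Proof.
move=> /phi_onto [v [Dv <-]].
have Dw : D (fun i => v i / (p ^ K)%:R) by move=> i; apply: p_adic_frac_divXp.
exists (phi (fun i => v i / (p ^ K)%:R)); split; first exact: phi_in.
rewrite gpow_phi //; apply: eq_phi => i.
by move: (natrXp_neq0 p_gt0 K) => pK_neq0; field.
Qed.

Lemma prufer_layer_finite t : exists l : list G,
  forall c, A c -> gpow c (p ^ t) = gid -> List.In c l.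
Proof.
have pt_gt0 : (0 < p ^ t)%N by rewrite expn_gt0 p_gt0.
have pt_neq0 := natrXp_neq0 p_gt0 t.
pose E (e : {ffun 'I_r -> 'I_(p ^ t)}) := phi (fun i => (e i : nat)%:R / (p ^ t)%:R).
exists (List.map E (enum {ffun 'I_r -> 'I_(p ^ t)})).
move=> _ /phi_onto [v [Dv <-]]; rewrite gpow_phi // => /phi_eq1 pt_v_int.
have {}pt_v_int i : denq ((p ^ t)%:R * v i) = 1.
  by apply: pt_v_int => j; apply: p_adic_fracMn.
have /fin_all_exists [e /fin_all_exists [w vE]] i : exists (e : 'I_(p ^ t)) (w : int),
    v i = (e : nat)%:R / (p ^ t)%:R + w%:~R.
  have [e [w numE]] := int_ord_decomp (numq ((p ^ t)%:R * v i)) pt_gt0.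
  exists e, w; apply: (@mulfI _ ((p ^ t)%:R)) => //.
  rewrite -[X in X = _](divq_num_den ((p ^ t)%:R * v i)) pt_v_int divr1 numE.
  by rewrite rmorphD rmorphM /= !natz_intr; field.
have -> : phi v = E [ffun i => e i].
  rewrite /E -[RHS]gmulg1 -[gid](@phi_int (fun i => (w i)%:~R)); last by move=> i; exists (w i).
  rewrite -phiD => [|i|i]; last exact: p_adic_frac_int.
    by apply: eq_phi => i; rewrite ffunE vE.
  by rewrite ffunE; apply/(p_adic_fracP p_gt0); exists t, (e i : nat)%:Z.
by apply/List.in_map/mem_List_In; rewrite mem_enum.
Qed.

End PruferPower.

Section InjectiveEndomorphism.
Variable G : Grp.
Local Notation "x ⋅ y" := (@gmul G x y) (at level 40, left associativity).
Local Notation gid := (gone G).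
Local Notation inv := (@ginv G).
Variables (S A : G -> Prop) (m : nat) (reps : 'I_m -> G).
Hypotheses (S_subgroup : is_subgroup S) (A_subgroup : is_subgroup A).
Hypothesis sub_AS : forall a, A a -> S a.
Hypothesis reps_in : forall i, S (reps i).
Hypothesis reps_uniq : forall i j, A (inv (reps i) ⋅ reps j) -> i = j.
Hypothesis reps_cover : forall x, S x -> exists i, A (inv (reps i) ⋅ x).

Lemma coset_index_spec_ex y : exists i, S y -> A (inv (reps i) ⋅ y).
Proof.
have [i _] := reps_cover (subg1 S_subgroup).
by case: (classic (S y)) => [/reps_cover [j Aj]|notSy]; [exists j | exists i].
Qed.

(* Outside [S] this is an arbitrary index. *)
Definition coset_index (y : G) : 'I_m :=
  proj1_sig (constructive_indefinite_description _ (coset_index_spec_ex y)).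

Lemma coset_indexP y : S y -> A (inv (reps (coset_index y)) ⋅ y).
Proof. exact: (proj2_sig (constructive_indefinite_description _ (coset_index_spec_ex y))). Qed.

Lemma coset_index_unique y i : S y -> A (inv (reps i) ⋅ y) -> coset_index y = i.
Proof.
move=> Sy Ai; apply: reps_uniq.
have := subgM A_subgroup (coset_indexP Sy) (subgV A_subgroup Ai).
by rewrite ginvM ginvK !gmulA gmulgK.
Qed.

Definition coset_act (x : G) (i : 'I_m) : 'I_m :=
  if excluded_middle_informative (S x) then coset_index (x ⋅ reps i) else i.

Lemma coset_act_inj x : injective (coset_act x).
Proof.
rewrite /coset_act; case: excluded_middle_informative => /= [Sx|_] i j e //; apply: reps_uniq.
have Si : S (x ⋅ reps i) by apply: subgM.
have Sj : S (x ⋅ reps j) by apply: subgM.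
have := subgVM A_subgroup (coset_indexP Si) (coset_indexP Sj).
by rewrite e [inv _ ⋅ (x ⋅ reps i)]gmulA [inv _ ⋅ (x ⋅ reps j)]gmulA ginvM_cancel.
Qed.

Definition coset_perm (x : G) : {perm 'I_m} := perm (@coset_act_inj x).

Lemma coset_permE x i : S x -> coset_perm x i = coset_index (x ⋅ reps i).
Proof. by move=> Sx; rewrite permE /coset_act; case: excluded_middle_informative. Qed.

Lemma coset_permM x y : S x -> S y -> coset_perm (x ⋅ y) = (coset_perm y * coset_perm x)%g.
Proof.
move=> Sx Sy; apply/permP => i; rewrite permM !coset_permE //; last exact: subgM.
set j := coset_index (y ⋅ reps i).
have Sj : S (x ⋅ reps j) by apply: subgM.
apply: coset_index_unique; first by apply: subgM => //; apply: subgM.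
have := subgM A_subgroup (coset_indexP Sj) (coset_indexP (subgM S_subgroup Sy (reps_in i))).
by rewrite !gmulA gmulgK.
Qed.

Lemma coset_perm1 : coset_perm gid = 1%g.
Proof.
apply/permP => i; rewrite coset_permE ?perm1; last exact: subg1.
by apply: coset_index_unique; rewrite gmul1 // gmulV; apply: subg1.
Qed.

Lemma coset_permX x n : S x -> coset_perm (gpow x n) = (coset_perm x ^+ n)%g.
Proof.
move=> Sx; elim: n => [|n IH] /=; first exact: coset_perm1.
by rewrite coset_permM // ?IH ?expgSr //; apply: subgX.
Qed.

Lemma coset_perm_eq1 x : S x -> coset_perm x = 1%g -> A x.
Proof.
move=> Sx x_triv; set i0 := coset_index gid.
have A_i0 : A (reps i0).
  by apply: (subgVr A_subgroup); rewrite -[inv _]gmulg1; apply: coset_indexP; apply: subg1.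
have := coset_indexP (subgM S_subgroup Sx (reps_in i0)).
rewrite -coset_permE // x_triv perm1 => A_conj.
have -> : x = reps i0 ⋅ (inv (reps i0) ⋅ (x ⋅ reps i0)) ⋅ inv (reps i0).
  by rewrite gmulKVg gmulgK.
by apply: (subgM A_subgroup); [apply: (subgM A_subgroup) | apply: (subgV A_subgroup)].
Qed.

Variable p : nat.
Hypothesis p_prime : prime p.
Hypothesis A_torsion : forall a, A a -> exists t, gpow a (p ^ t) = gid.
Hypothesis A_divisible : forall a K, A a -> exists b, A b /\ a = gpow b (p ^ K).
Hypothesis A_layer_finite : forall t, exists l : list G,
  forall c, A c -> gpow c (p ^ t) = gid -> List.In c l.
Variable psi : G -> G.
Hypotheses (psi_hom : is_hom psi) (psi_inj : forall x y, psi x = psi y -> x = y).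
Hypothesis psi_S : forall x, S x -> S (psi x).

Lemma inj_endo_core a : A a -> A (psi a).
Proof.
move=> Aa; have [t a_tors] := A_torsion Aa.
pose M := #|[set: {perm 'I_m}]|.
have [b [Ab def_a]] := A_divisible (logn p M) Aa.
have S_psi_b : S (psi b) by apply/psi_S/sub_AS.
have S_psi_a : S (psi a) by apply/psi_S/sub_AS.
(* [coset_perm (psi a)] is a [p]-element, and a [p']-element as an [M`_p]-th power
   in a group of order [M]. *)
have order_p : (coset_perm (psi a) ^+ (p ^ t) = 1)%g.
  by rewrite -coset_permX // -homX // a_tors hom1 // coset_perm1.
have order_p' : (coset_perm (psi a) ^+ (M`_p^') = 1)%g.
  rewrite def_a homX // coset_permX // -expgM -p_part partnC ?cardG_gt0 //.
  by apply: expg_cardG; rewrite in_setT.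
have coprime_parts : coprime (p ^ t) (M`_p^').
  by apply: pnat_coprime; last exact: part_pnat; rewrite pnatX pnat_id.
apply: coset_perm_eq1 => //; apply/eqP; rewrite -order_eq1 -dvdn1 -(eqP coprime_parts).
by rewrite dvdn_gcd !order_dvdn order_p order_p' !eqxx.
Qed.

Lemma inj_endo_core_onto a : A a -> exists c, A c /\ psi c = a.
Proof.
move=> Aa; have [t a_tors] := A_torsion Aa; have [l layer_l] := A_layer_finite t.
pose X c := A c /\ gpow c (p ^ t) = gid.
have Xa : X a by split.
have [|c X_psi|x y _ _|c [[Ac _] <-]] := @inj_on_finite_onto G X l psi _ _ _ a Xa.
- by move=> c [Ac c_tors]; apply: layer_l.
- by case: X_psi => Ac c_tors; split; [apply: inj_endo_core | rewrite -homX // c_tors hom1].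
- exact: psi_inj.
- by exists c.
Qed.

Lemma inj_endo_onto y : S y -> exists x, S x /\ psi x = y.
Proof.
move=> Sy; pose sigma i := coset_index (psi (reps i)).
have sigma_inj : injective sigma.
  move=> i j e; apply: reps_uniq.
  have := subgVM A_subgroup (coset_indexP (psi_S (reps_in i))) (coset_indexP (psi_S (reps_in j))).
  rewrite -/(sigma i) -/(sigma j) e ginvM ginvK -gmulA gmulKVg -homV // -psi_hom.
  by case/inj_endo_core_onto=> c [Ac /psi_inj <-].
have [sigma' _ sigma'K] := injF_bij sigma_inj.
set i := sigma' (coset_index y).
have := coset_indexP (psi_S (reps_in i)); rewrite -/(sigma i) sigma'K => A_i.
have := subgVM A_subgroup A_i (coset_indexP Sy).
rewrite ginvM ginvK -gmulA gmulKVg => /inj_endo_core_onto [c [Ac psi_c]].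
exists (reps i ⋅ c); split; first by apply: (subgM S_subgroup) => //; apply: sub_AS.
by rewrite psi_hom psi_c gmulKVg.
Qed.

End InjectiveEndomorphism.

Section Automorphisms.
Variable H : Grp.
Local Notation "x ⋅ y" := (@gmul H x y) (at level 40, left associativity).
Local Notation gid := (gone H).
Local Notation inv := (@ginv H).

Lemma discrete_p_toral_inj_endo_onto p (S : H -> Prop) (psi : H -> H) :
  prime p -> discrete_p_toral p S ->
  is_hom psi -> (forall x y, psi x = psi y -> x = y) -> (forall x, S x -> S (psi x)) ->
  forall y, S y -> exists x, S x /\ psi x = y.
Proof.
move=> p_prime [S_sub [A [r [n [A_sub [sub_AS [_ [[phi] /= prufer [reps reps_coset]]]]]]]]].
have p_gt0 := prime_gt0 p_prime.
case: prufer => phi_in [phiD [phi_onto phi_eq1]]; case: reps_coset => reps_in [reps_uniq reps_cover].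
apply: (inj_endo_onto S_sub A_sub sub_AS reps_in reps_uniq reps_cover p_prime).
- by move=> a; apply: (prufer_torsion p_gt0 phiD phi_onto phi_eq1).
- by move=> a K; apply: (prufer_divisible p_gt0 phi_in phiD phi_onto phi_eq1).
- by move=> t; apply: (prufer_layer_finite p_gt0 phiD phi_onto phi_eq1).
Qed.

Definition image (f : H -> H) (P : H -> Prop) : H -> Prop :=
  fun y => exists x, P x /\ f x = y.

Lemma image_subgroup f P : is_hom f -> is_subgroup P -> is_subgroup (image f P).
Proof.
move=> f_hom P_sub; split; [|split].
- by exists gid; split; [apply: subg1 | apply: hom1].
- by move=> _ _ [x [Px <-]] [y [Py <-]]; exists (x ⋅ y); split; [apply: subgM | apply: f_hom].
- by move=> _ [x [Px <-]]; exists (inv x); split; [apply: subgV | apply: homV].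
Qed.

Lemma discrete_p_toral_image p f P : is_hom f -> (forall x y, f x = f y -> x = y) ->
  discrete_p_toral p P -> discrete_p_toral p (image f P).
Proof.
move=> f_hom f_inj [P_sub [A [r [n [A_sub [sub_AP [A_normal [[phi] /= prufer]]]]]]]].
case: prufer => phi_in [phiD [phi_onto phi_eq1]] [reps [reps_in [reps_uniq reps_cover]]].
split; first exact: image_subgroup.
exists (image f A), r, n; split; first exact: image_subgroup.
split; first by move=> _ [a [Aa <-]]; exists a; split; [apply: sub_AP |].
split.
  move=> _ _ [x [Px <-]] [a [Aa <-]]; exists (conj x a).
  by split; [apply: A_normal | apply: homJ].
split.
  exists (fun v => f (phi v)) => /=; split; [|split; [|split]].
  - by move=> v Dv; exists (phi v); split => //; apply: phi_in.
  - by move=> v w Dv Dw; rewrite phiD.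
  - by move=> _ [a [Aa <-]]; have [v [Dv <-]] := phi_onto _ Aa; exists v.
  - move=> v Dv; rewrite -phi_eq1 //; split => [|->]; last exact: hom1.
    by move=> e; apply: f_inj; rewrite e hom1.
exists (fun i => f (reps i)); split; [|split].
- by move=> i; exists (reps i).
- move=> i j [a [Aa e]]; apply: reps_uniq.
  by rewrite -homV // -f_hom in e; rewrite -(f_inj _ _ e).
- move=> _ [x [Px <-]]; have [i Ai] := reps_cover _ Px; exists i.
  by exists (inv (reps i) ⋅ x); split => //; rewrite f_hom homV.
Qed.

Lemma conjM (h k x : H) : conj (h ⋅ k) x = conj h (conj k x).
Proof. by rewrite /conj ginvM !gmulA. Qed.

Lemma conj1 (x : H) : conj gid x = x.
Proof. by rewrite /conj gmul1 ginv1 gmulg1. Qed.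

Lemma conjK (h x : H) : conj (inv h) (conj h x) = x.
Proof. by rewrite -conjM gmulV conj1. Qed.

Lemma conjVK (h x : H) : conj h (conj (inv h) x) = x.
Proof. by rewrite -conjM gmulgV conj1. Qed.

Lemma conj_hom (h : H) : is_hom (conj h).
Proof. by move=> x y; rewrite /conj !gmulA gmulgKV. Qed.

Lemma conj_aut (h : H) : is_aut (conj h).
Proof.
split; first exact: conj_hom.
split; first by move=> x y e; rewrite -(conjK h x) e conjK.
by move=> y; exists (conj (inv h) y); apply: conjVK.
Qed.

Lemma conj_id_central (h : H) : (forall x, conj h x = x) <-> central h.
Proof.
split => [h_triv x | h_central x]; first by rewrite -{2}(h_triv x) /conj gmulgKV.
by rewrite /conj h_central gmulgK.
Qed.

Lemma central_normalizes (S : H -> Prop) (z : H) : central z -> normalizes S z.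
Proof.
move/conj_id_central=> z_triv; split => [x|y Sy]; first by rewrite z_triv.
by exists y; rewrite z_triv.
Qed.

Lemma normalizes_conj_aut_S (S : H -> Prop) (h : H) : normalizes S h -> is_aut_S S (conj h).
Proof. by split; [apply: conj_aut |]. Qed.

Lemma eq_maps_onto (S : H -> Prop) (f g : H -> H) :
  (forall x, f x = g x) -> maps_onto f S -> maps_onto g S.
Proof.
move=> fg [f_in f_onto]; split => [x Sx|y /f_onto [x [Sx <-]]]; first by rewrite -fg; apply: f_in.
by exists x; rewrite fg.
Qed.

Lemma aut_S_inner (S : H -> Prop) (f : H -> H) : is_aut_S S f ->
  is_inner f <-> exists h, normalizes S h /\ forall x, f x = conj h x.
Proof.
case=> _ f_onto; split => [[h fE] | [h [_ fE]]]; last by exists h.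
by exists h; split => //; apply: eq_maps_onto f_onto.
Qed.

Lemma aut_conj_aut_S p (S : H -> Prop) (f : H -> H) : prime p -> sylow p S -> is_aut f ->
  exists g, is_aut_S S g /\ exists h, forall x, f x = conj h (g x).
Proof.
move=> p_prime [S_toral S_sylow] [f_hom [f_inj f_onto]].
have [h fS_sub] := S_sylow _ (discrete_p_toral_image f_hom f_inj S_toral).
pose g x := conj h (f x).
have g_hom : is_hom g by move=> x y; rewrite /g f_hom conj_hom.
have g_inj x y : g x = g y -> x = y by move=> /(proj1 (proj2 (conj_aut h))) /f_inj.
have g_S x : S x -> S (g x) by move=> Sx; apply: fS_sub; exists x.
exists g; split; last by exists (inv h) => x; rewrite conjK.
split; last by split => //; apply: (discrete_p_toral_inj_endo_onto p_prime S_toral).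
split => //; split => // y; have [x fx] := f_onto (conj (inv h) y).
by exists x; rewrite /g fx conjVK.
Qed.

End Automorphisms.

Unset Implicit Arguments.

Theorem lemma3p1 (H : Grp) (p : nat) (S : H -> Prop)
  (hp : prime p) (hS : sylow p S) :
  (* Z(H) is a subgroup of N_H(S) (injectivity of the inclusion is trivial) *)
  (forall z : H, central z -> normalizes S z) /\
  (* h |-> c_h is a homomorphism N_H(S) -> Aut(H,S) *)
  (forall h : H, normalizes S h -> is_aut_S S (conj h)) /\
  (forall h k x : H, conj (gmul h k) x = conj h (conj k x)) /\
  (* exactness at N_H(S): kernel is Z(H) *)
  (forall h : H, normalizes S h -> ((forall x, conj h x = x) <-> central h)) /\
  (* exactness at Aut(H,S): kernel of Aut(H,S) -> Out(H) is the image of N_H(S) *)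
  (forall f : H -> H, is_aut_S S f ->
     (is_inner f <-> exists h, normalizes S h /\ forall x, f x = conj h x)) /\
  (* exactness at Out(H): Aut(H,S) -> Out(H) is surjective *)
  (forall f : H -> H, is_aut f ->
     exists g, is_aut_S S g /\ exists h, forall x, f x = conj h (g x)).
Proof.
split; first exact: central_normalizes.
split; first exact: normalizes_conj_aut_S.
split; first exact: conjM.
split; first by move=> h _; apply: conj_id_central.
split; first exact: aut_S_inner.
by move=> f; apply: aut_conj_aut_S hp hS.
Qed.
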